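(* Let $\epsilon\ge0$ and let $U\in\mathscr P_+$ with $U^\theta\in\mathbb{SO}(k,K)$ for constants $0<k\le K<\infty$; let $J_t=\mathbb E[\int_t^\infty U_s^\theta ds\mid\mathcal F_t]$. If $\epsilon>0$, let $A,B>0$ be the positive solutions of $A=K^{-1}(A^\rho+\epsilon)$ and $B=k^{-1}(B^\rho+\epsilon)$; if $\epsilon=0$, set $A=K^{-\theta}$ and $B=k^{-\theta}$. Let $W$ be the unique fixed point of the operator $F^\epsilon_{U,U}$ for which there are constants $0<c_1\le c_2<\infty$ with $c_1J\le W\le c_2J$ (such a fixed point exists). Then $kA\,J\le W\le KB\,J$.
   Context: Work on a filtered probability space $(\Omega,\mathcal F,(\mathcal F_t)_{t\ge0},\mathbb P)$ with complete continuous filtration and trivial $\mathcal F_0$. $\mathscr P$ denotes progressively measurable processes, $\mathscr P_+$ (resp. $\mathscr P_{++}$) nonnegative (resp. strictly positive) ones. $\theta>1$ is fixed and $\rho=\frac{\theta-1}{\theta}$. For $X\in\mathscr P_+$, $J^X_t=\mathbb E[\int_t^\infty X_sds\mid\mathcal F_t]$. $\mathbb{SO}(k,K)$ is the set of $X\in\mathscr P_{++}$ with $\mathbb E\int_0^\infty X_tdt<\infty$ and $kJ^X\le X\le KJ^X$. For $U\in\mathscr P_+$, let $\mathbb I(h_{EZ},U)=\{W\in\mathscr P_+:\mathbb E\int_0^\infty U_sW_s^\rho ds<\infty\}$, and define $F^\epsilon_{U,U}:\mathbb I(h_{EZ},U)\to\mathscr P_+$ by $F^\epsilon_{U,U}(W)_t=\mathbb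 E[\int_t^\infty (U_sW_s^\rho+\epsilon U_s^\theta)ds\mid\mathcal F_t]$ (a càdlàg version being chosen). A fixed point is $W\in\mathbb I(h_{EZ},U)$ with $F^\epsilon_{U,U}(W)=W$. *)

From HB Require Import structures.
From mathcomp Require Import all_boot all_order all_algebra.
From mathcomp Require Import all_classical all_reals all_analysis.
Set Implicit Arguments. Unset Strict Implicit. Unset Printing Implicit Defensive.
Import Order.TTheory GRing.Theory Num.Theory.
Import numFieldNormedType.Exports.
Local Open Scope classical_set_scope.
Local Open Scope ring_scope.

Section Defs.
Context (R : realType) (d : measure_display) (Omega : measurableType d)
        (P : probability Omega R).

Definition rho (theta : R) : R := (theta - 1) / theta.

Definition std_filtration (F : R -> set (set Omega)) : Prop :=
  [/\ [/\ (forall t, 0 <= t -> sigma_algebra setT (F t)),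
      (forall t, 0 <= t -> F t `<=` measurable) &
      (forall s t, 0 <= s -> s <= t -> F s `<=` F t)],
      (forall N : set Omega,
          (exists M, [/\ measurable M, P M = 0%E & N `<=` M]) ->
          forall t, 0 <= t -> F t N),
      (forall t A, 0 <= t -> (forall s, t < s -> F s A) -> F t A),
      (forall t, 0 < t ->
          F t = <<s \bigcup_(s in [set s | 0 <= s < t]) F s >>) &
      (forall A, F 0 A -> P A = 0%E \/ P A = 1%E)].

Definition sub_meas (G : set (set Omega)) (Y : Omega -> R) : Prop :=
  forall B : set R, measurable B -> G (Y @^-1` B).

Definition is_cond_exp (G : set (set Omega)) (X : Omega -> \bar R)
  (Y : Omega -> R) : Prop :=
  [/\ sub_meas G Y,
      P.-integrable setT (EFin \o Y) &
      forall A, G A -> (\int[P]_(w in A) (Y w)%:E = \int[P]_(w in A) X w)%E].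

Definition progressive (F : R -> set (set Omega)) (X : R -> Omega -> R) : Prop :=
  forall t, 0 <= t -> forall B : set R, measurable B ->
    <<s [set A `*` C | A in [set A : set R | measurable A /\ A `<=` `[0, t]]
                     & C in F t] >>
      [set p : R * Omega | 0 <= p.1 <= t /\ B (X p.1 p.2)].

Definition nonneg_proc (X : R -> Omega -> R) : Prop :=
  forall t w, 0 <= t -> 0 <= X t w.
Definition pos_proc (X : R -> Omega -> R) : Prop :=
  forall t w, 0 <= t -> 0 < X t w.

Definition tail_int (X : R -> Omega -> R) (t : R) (w : Omega) : \bar R :=
  (\int[@lebesgue_measure R]_(s in `[t, +oo[) (X s w)%:E)%E.

Definition is_J (F : R -> set (set Omega)) (X JX : R -> Omega -> R) : Prop :=
  forall t, 0 <= t -> is_cond_exp (F t) (tail_int X t) (JX t).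

Definition proc_le (X Y : R -> Omega -> R) : Prop :=
  forall t, 0 <= t -> {ae P, forall w, X t w <= Y t w}.

Definition SO (F : R -> set (set Omega)) (k K : R) (X JX : R -> Omega -> R)
  : Prop :=
  [/\ [/\ progressive F X, pos_proc X &
      (\int[P]_w \int[@lebesgue_measure R]_(s in `[0%R, +oo[) (X s w)%:E < +oo)%E],
      is_J F X JX,
      proc_le (fun t w => k * JX t w) X &
      proc_le X (fun t w => K * JX t w)].

Definition in_I (F : R -> set (set Omega)) (theta : R) (U W : R -> Omega -> R)
  : Prop :=
  [/\ progressive F W, nonneg_proc W &
      (\int[P]_w \int[@lebesgue_measure R]_(s in `[0%R, +oo[)
           (U s w * W s w `^ rho theta)%:E < +oo)%E].

Definition cadlag (X : R -> Omega -> R) : Prop :=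
  forall w t, 0 <= t ->
    X s w @[s --> t^'+] --> X t w /\ (0 < t -> cvg (X s w @[s --> t^'-])).

Definition fixed_point (F : R -> set (set Omega)) (theta eps : R)
  (U W : R -> Omega -> R) : Prop :=
  [/\ in_I F theta U W, cadlag W &
      forall t, 0 <= t ->
        is_cond_exp (F t)
          (tail_int (fun s w => U s w * W s w `^ rho theta
                                + eps * U s w `^ theta) t) (W t)].
End Defs.

(* If c J <= W, then W >= (c/K) U^theta because U^theta <= K J, so the
   integrand U W^rho + eps U^theta of the fixed-point equation dominates
   ((c/K)^rho + eps) U^theta; taking conditional expectations of the tail
   integrals gives ((c/K)^rho + eps) J <= W.  The constants c with c J <= W
   are bounded by c2 and closed under increasing limits, so their supremum s
   is one of them and satisfies (s/K)^rho + eps <= s.  As rho < 1, the map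
   c |-> ((c/K)^rho + eps) / c is decreasing, hence s is at least its fixed
   point K A.  Symmetrically the least c with W <= c J is at most the fixed
   point k B of c |-> (c/k)^rho + eps, and k <= K concludes. *)

From HB Require Import structures.
From mathcomp Require Import all_boot all_order all_algebra.
From mathcomp Require Import all_classical all_reals all_analysis.
From mathcomp Require Import measurable_realfun lra.
Set Implicit Arguments. Unset Strict Implicit. Unset Printing Implicit Defensive.
Import Order.TTheory GRing.Theory Num.Theory.
Local Open Scope classical_set_scope.
Local Open Scope ring_scope.

Section RealBounds.
Variable R : realType.
Implicit Types a b c eps K l r s u w x y z : R.

Lemma gtr1_powR a r : 0 < a < 1 -> r < 1 -> a < a `^ r.
Proof.
move=> /andP[a0 a1] r1.
rewrite /powR gt_eqF // -[X in X < _](lnK (x:=a)) ?posrE // ltr_expR.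
have := ln_lt0 (x:=a); rewrite a0 a1 => /(_ isT) la0.
nra.
Qed.

Lemma le_of_forall_le_addinvn x y z : 0 <= z ->
  (forall n : nat, x <= y + n.+1%:R^-1 * z) -> x <= y.
Proof.
move=> z0 hn; rewrite leNgt; apply/negP => yx.
have [z_eq0|z_neq0] := eqVneq z 0.
  by move: (hn 0%N); rewrite z_eq0 mulr0 addr0 leNgt yx.
have z_gt0 : 0 < z by rewrite lt_def z_neq0.
have /ltr_add_invr[n] : 0 < (x - y) / z by rewrite divr_gt0 // subr_gt0.
rewrite add0r ltr_pdivlMr // => hnz.
by move: (hn n); rewrite -lerBlDl => /(lt_le_trans hnz); rewrite ltxx.
Qed.

Definition improve K r eps c := (c / K) `^ r + eps.

Lemma improve_scale_gt K r eps a l : 0 < K -> 0 <= eps -> r < 1 -> 0 < a ->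
  0 < l < 1 -> l * improve K r eps a < improve K r eps (l * a).
Proof.
move=> K0 eps0 r1 a0 /[dup] /andP[l0 l1] l01.
have aK0 : 0 < (a / K) `^ r by rewrite powR_gt0 // divr_gt0.
rewrite /improve mulrDr -mulrA (@powRM _ l) ?divr_ge0 ?ltW //.
have : l * (a / K) `^ r < l `^ r * (a / K) `^ r by rewrite ltr_pM2r // gtr1_powR.
have : l * eps <= eps by rewrite ler_piMl // ltW.
lra.
Qed.

Lemma fixpoint_le_of_improve_le K r eps a s : 0 < K -> 0 <= eps -> r < 1 -> 0 < a ->
  improve K r eps a = a -> 0 < s -> improve K r eps s <= s -> a <= s.
Proof.
move=> K0 eps0 r1 a0 fixa s0 hs; rewrite leNgt; apply/negP => sa.
have := improve_scale_gt (l := s / a) K0 eps0 r1 a0.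
rewrite fixa divfK ?gt_eqF // divr_gt0 //= ltr_pdivrMr // mul1r.
by move=> /(_ sa); rewrite ltNge hs.
Qed.

Lemma le_fixpoint_of_le_improve K r eps b s : 0 < K -> 0 <= eps -> r < 1 -> 0 < b ->
  improve K r eps b = b -> 0 < s -> s <= improve K r eps s -> s <= b.
Proof.
move=> K0 eps0 r1 b0 fixb s0 hs; rewrite leNgt; apply/negP => bs.
have := improve_scale_gt (l := b / s) K0 eps0 r1 s0.
rewrite divfK ?gt_eqF // fixb divr_gt0 //= ltr_pdivrMr // mul1r => /(_ bs).
have : b / s * s <= b / s * improve K r eps s by rewrite ler_wpM2l // divr_ge0 // ltW.
rewrite divfK ?gt_eqF //; lra.
Qed.

Lemma rho_ge0 (theta : R) : 1 < theta -> 0 <= rho theta.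
Proof.
by move=> th1; rewrite /rho divr_ge0 // ?subr_ge0 ltW // (lt_trans ltr01).
Qed.

Lemma rho_lt1 (theta : R) : 1 < theta -> rho theta < 1.
Proof.
move=> th1; have th0 : 0 < theta by apply: lt_trans th1.
by rewrite /rho ltr_pdivrMr // mul1r ltrBlDr ltrDl.
Qed.

Lemma mulr_powR_rho (theta : R) u a : 1 < theta -> 0 <= u -> 0 <= a ->
  u * (a * u `^ theta) `^ rho theta = a `^ rho theta * u `^ theta.
Proof.
move=> th1 u0 a0; have th0 : 0 < theta by apply: lt_trans th1.
rewrite powRM ?powR_ge0 // -powRrM.
have -> : theta * rho theta = theta - 1 by rewrite /rho mulrC divfK // gt_eqF.
by rewrite mulrCA mulr_powRB1.
Qed.

Lemma improve_mulr_le (theta : R) eps c K u w y : 1 < theta -> 0 <= c -> 0 < K ->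
  0 <= u -> c * y <= w -> u `^ theta <= K * y ->
  improve K (rho theta) eps c * u `^ theta <= u * w `^ rho theta + eps * u `^ theta.
Proof.
move=> th1 c0 K0 u0 cyw uKy.
have cK0 : 0 <= c / K by rewrite divr_ge0 // ltW.
have cKu_le : c / K * u `^ theta <= w.
  apply: le_trans cyw; apply: le_trans (ler_wpM2l cK0 uKy) _.
  by rewrite mulrA divfK // gt_eqF.
have cKu0 : 0 <= c / K * u `^ theta by rewrite mulr_ge0 // powR_ge0.
have := ler_wpM2l u0 (ge0_ler_powR (rho_ge0 th1) cKu0 (le_trans cKu0 cKu_le) cKu_le).
by rewrite mulr_powR_rho // /improve mulrDl lerD2r.
Qed.

Lemma le_improve_mulr (theta : R) eps c K u w y : 1 < theta -> 0 <= c -> 0 < K ->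
  0 <= u -> 0 <= w -> w <= c * y -> K * y <= u `^ theta ->
  u * w `^ rho theta + eps * u `^ theta <= improve K (rho theta) eps c * u `^ theta.
Proof.
move=> th1 c0 K0 u0 w0 wcy Kyu.
have cK0 : 0 <= c / K by rewrite divr_ge0 // ltW.
have w_le : w <= c / K * u `^ theta.
  apply: le_trans wcy _; apply: le_trans _ (ler_wpM2l cK0 Kyu).
  by rewrite mulrA divfK // gt_eqF.
have := ler_wpM2l u0 (ge0_ler_powR (rho_ge0 th1) w0 (le_trans w0 w_le) w_le).
by rewrite mulr_powR_rho // /improve mulrDl lerD2r.
Qed.

Lemma improve_fixpoint (theta : R) eps K A : 1 < theta -> 0 < K -> 0 <= eps ->
  (0 < eps -> 0 < A /\ A = K^-1 * (A `^ rho theta + eps)) ->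
  (eps = 0 -> A = K `^ (- theta)) ->
  0 < A /\ improve K (rho theta) eps (K * A) = K * A.
Proof.
move=> th1 K0 eps0 hApos hA0.
have th0 : 0 < theta by apply: lt_trans th1.
rewrite /improve.
have -> : K * A / K = A by rewrite mulrC mulKf // gt_eqF.
have [eps_gt0|eps_le0] := ltP 0 eps.
  have [A0 eA] := hApos eps_gt0; split => //.
  by rewrite {2}eA mulrA mulfV ?gt_eqF // mul1r.
have eps_eq0 : eps = 0 by apply/le_anti; rewrite eps_le0 eps0.
rewrite eps_eq0 addr0 (hA0 eps_eq0) powR_gt0 //; split => //.
rewrite -powRrM -{2}(powRr1 (ltW K0)) -powRD; last by rewrite (gt_eqF K0) implybT.
by congr (_ `^ _); rewrite /rho mulNr mulrC divfK ?gt_eqF // opprB addrC.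
Qed.

End RealBounds.

Section TailIntegral.
Context (R : realType) (d : measure_display) (Omega : measurableType d)
  (P : probability Omega R).
Implicit Types (t : R) (X Y : R -> Omega -> R).
Local Notation lebesgue := (@lebesgue_measure R).

Definition measurable_from t X : Prop :=
  measurable_fun [set p : R * Omega | t <= p.1] (fun p => X p.1 p.2).

Lemma measurable_fst_ge t : measurable [set p : R * Omega | t <= p.1].
Proof.
have -> : [set p : R * Omega | t <= p.1] = `[t, +oo[%classic `*` setT.
  by apply/seteqP; split => -[s w] /=; rewrite in_itv /= andbT //; case.
exact: measurableX.
Qed.

Lemma progressive_measurable_from (F : R -> set (set Omega)) X t :
  (forall s, 0 <= s -> F s `<=` measurable) -> progressive F X -> 0 <= t ->
  measurable_from t X.
Proof.
move=> hFm hX t0; apply: (measurable_funS (measurable_fst_ge 0)).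
  by move=> [s w] /= /(le_trans t0).
move=> _ B mB.
have -> : [set p : R * Omega | 0 <= p.1] `&` (fun p => X p.1 p.2) @^-1` B =
    \bigcup_n [set p | 0 <= p.1 <= n%:R /\ B (X p.1 p.2)].
  apply/seteqP; split.
  - move=> [s w] /= [s0 Bx]; exists (Num.truncn s).+1 => //=.
    by split => //; rewrite s0 /= ltW // truncnS_gt.
  - by move=> [s w] [n _] /= [/andP[s0 _] Bx]; split.
apply: bigcupT_measurable => n.
apply: smallest_sub (hX n%:R (ler0n _ _) B mB).
  exact: sigma_algebra_measurable.
move=> _ [A [mA _] [C FC <-]]; apply: measurableX => //.
exact: hFm (ler0n _ _) _ FC.
Qed.

Definition restrict_from t X : R * Omega -> \bar R :=
  (fun p => (X p.1 p.2)%:E) \_ [set p : R * Omega | t <= p.1].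

Lemma measurable_restrict_from t X :
  measurable_from t X -> measurable_fun setT (restrict_from t X).
Proof.
by move=> mX; apply/(measurable_restrictT _ (measurable_fst_ge t)); exact/measurable_EFinP.
Qed.

Lemma restrict_from_ge0 t X : (forall s w, t <= s -> 0 <= X s w) ->
  forall p, (0 <= restrict_from t X p)%E.
Proof.
move=> X0 [s w]; rewrite /restrict_from patchE.
by case: ifPn => // /set_mem /= ts; rewrite lee_fin X0.
Qed.

Lemma restrict_from_section t X w :
  (fun s => restrict_from t X (s, w)) = (fun s => (X s w)%:E) \_ `[t, +oo[.
Proof.
apply/funext => s; rewrite /restrict_from !patchE.
congr (if _ then _ else _); apply/idP/idP => /set_mem;
  by rewrite /= ?in_itv /= ?andbT => ts; apply/mem_set; rewrite /= ?in_itv /= ?ts.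
Qed.

Lemma measurable_section_from t X w :
  measurable_from t X -> measurable_fun `[t, +oo[ (fun s => (X s w)%:E).
Proof.
move=> mX; apply/(measurable_restrictT _ (measurable_itv _)).
by rewrite -restrict_from_section; exact: measurable_fun_pair1 (measurable_restrict_from mX).
Qed.

Lemma tail_intE t X w :
  tail_int X t w = fubini_G lebesgue (restrict_from t X) w.
Proof. by rewrite /fubini_G /tail_int [LHS]integral_mkcond restrict_from_section. Qed.

Lemma tail_int_ge0 t X : (forall s w, t <= s -> 0 <= X s w) ->
  forall w, (0 <= tail_int X t w)%E.
Proof.
move=> X0 w; apply: integral_ge0 => s.
by rewrite /= in_itv /= andbT => ts; rewrite lee_fin X0.
Qed.

Lemma measurable_tail_int t X : measurable_from t X ->
  (forall s w, t <= s -> 0 <= X s w) -> measurable_fun setT (tail_int X t).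
Proof.
move=> mX X0.
have := measurable_fun_fubini_tonelli_G (m1 := lebesgue) _
  (measurable_restrict_from mX) (restrict_from_ge0 X0).
by apply: eq_measurable_fun => w _; rewrite tail_intE.
Qed.

Lemma ae_tail_int_eq0 t X : measurable_from t X ->
  (forall s w, t <= s -> 0 <= X s w) ->
  (forall s, t <= s -> {ae P, forall w, X s w = 0}) ->
  {ae P, forall w, tail_int X t w = 0%E}.
Proof.
move=> mX X0 Xae.
have mf := measurable_restrict_from mX; have f0 := restrict_from_ge0 X0.
have int0 : (\int[lebesgue]_s \int[P]_w restrict_from t X (s, w) = 0)%E.
  apply: integral0_eq => s _.
  have [ts|st] := leP t s.
    rewrite (ae_eq_integral (cst 0%E)) ?integral0 //.
    - exact: measurable_fun_pair2.
    - apply: filterS (Xae s ts) => w hw _.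
      by rewrite /restrict_from patchE mem_set //= hw.
  apply: integral0_eq => w _.
  by rewrite /restrict_from patchE memNset //=; apply/negP; rewrite -ltNge.
have absG0 : (\int[P]_w `|fubini_G lebesgue (restrict_from t X) w| = 0)%E.
  rewrite -int0 (fubini_tonelli (m1 := lebesgue) (m2 := P) _ mf f0).
  apply: eq_integral => w _; rewrite gee0_abs //.
  by apply: integral_ge0 => s _.
have mG := measurable_fun_fubini_tonelli_G (m1 := lebesgue) _ mf f0.
apply: filterS ((ae_eq_integral_abs P measurableT mG).1 absG0) => w /(_ I) /=.
by rewrite tail_intE.
Qed.

Lemma ae_tail_int_le t X Y : measurable_from t X -> measurable_from t Y ->
  (forall s w, t <= s -> 0 <= X s w) -> (forall s w, t <= s -> 0 <= Y s w) ->
  (forall s, t <= s -> {ae P, forall w, X s w <= Y s w}) ->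
  {ae P, forall w, (tail_int X t w <= tail_int Y t w)%E}.
Proof.
move=> mX mY X0 Y0 XYae.
pose D s w := Num.max 0 (X s w - Y s w).
have mD : measurable_from t D.
  apply: measurable_maxr; first exact: measurable_cst.
  exact: measurable_funB.
have D0 s w : t <= s -> 0 <= D s w by rewrite /D le_max lexx.
have Dae s : t <= s -> {ae P, forall w, D s w = 0}.
  move=> ts; apply: filterS (XYae s ts) => w XYw.
  by apply/max_idPl; rewrite subr_le0.
apply: filterS (ae_tail_int_eq0 mD D0 Dae) => w D_eq0.
apply: (@le_trans _ _ (\int[lebesgue]_(s in `[t, +oo[) ((Y s w)%:E + (D s w)%:E))%E).
  apply: ge0_le_integral => //.
  - by move=> s; rewrite /= in_itv /= andbT => ts; rewrite lee_fin X0.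
  - exact: measurable_section_from.
  - by apply: emeasurable_funD; exact: measurable_section_from.
  - move=> s _; rewrite -EFinD lee_fin -lerBlDl.
    by rewrite /D le_max lexx orbT.
rewrite ge0_integralD //.
- by rewrite [X in (_ + X)%E]D_eq0 adde0.
- by move=> s; rewrite /= in_itv /= andbT => ts; rewrite lee_fin Y0.
- exact: measurable_section_from.
- by move=> s; rewrite /= in_itv /= andbT => ts; rewrite lee_fin D0.
- exact: measurable_section_from.
Qed.

End TailIntegral.

Section CondExpComparison.
Context (R : realType) (d : measure_display) (Omega : measurableType d)
  (P : probability Omega R).
Variable G : set (set Omega).
Hypotheses (hG : sigma_algebra setT G) (hGm : G `<=` measurable).
Implicit Types (t : R) (X : R -> Omega -> R).

Lemma ae_le_of_integral_le (Y1 Y2 : Omega -> R) : sub_meas G Y1 -> sub_meas G Y2 ->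
  P.-integrable setT (EFin \o Y1) -> P.-integrable setT (EFin \o Y2) ->
  (forall A, G A -> (\int[P]_(w in A) (Y1 w)%:E <= \int[P]_(w in A) (Y2 w)%:E)%E) ->
  {ae P, forall w, Y1 w <= Y2 w}.
Proof.
move=> GY1 GY2 iY1 iY2 int_le.
have Gmeas (Y : Omega -> R) : sub_meas G Y ->
    @measurable_fun _ _ (g_sigma_algebraType G) R setT Y.
  by move=> GY _ B mB; rewrite setTI; exact: sub_sigma_algebra (GY B mB).
set A := [set w | Y2 w < Y1 w].
have GA : G A.
  have : <<s G >> (setT `&` (fun w => Y2 w < Y1 w) @^-1` [set true]) :=
    @measurable_fun_ltr _ (g_sigma_algebraType G) R setT Y2 Y1
      (Gmeas _ GY2) (Gmeas _ GY1) measurableT [set true] I.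
  by rewrite sigma_algebra_id // setTI; congr G; apply/seteqP; split => w /=.
have mA := hGm GA.
have intA0 : (\int[P]_(w in A) `|(Y1 w)%:E - (Y2 w)%:E| = 0)%E.
  have -> : (\int[P]_(w in A) `|(Y1 w)%:E - (Y2 w)%:E| =
             \int[P]_(w in A) ((Y1 w)%:E - (Y2 w)%:E))%E.
    apply: eq_integral => w; rewrite inE => Aw.
    by rewrite gee0_abs // -EFinB lee_fin subr_ge0 ltW.
  apply/eqP; rewrite eq_le; apply/andP; split.
    rewrite integralB_EFin //; try exact: (integrableS measurableT).
    by rewrite sube_le0; exact: int_le.
  by apply: integral_ge0 => w Aw; rewrite -EFinB lee_fin subr_ge0 ltW.
have mY (Y : Omega -> R) : sub_meas G Y -> measurable_fun setT (EFin \o Y).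
  by move=> GY; apply/measurable_EFinP => _ B mB; rewrite setTI; exact/hGm/GY.
have mB : measurable_fun A (fun w => (Y1 w)%:E - (Y2 w)%:E)%E.
  by apply: measurable_funS (emeasurable_funB (mY _ GY1) (mY _ GY2)).
apply: filterS ((ae_eq_integral_abs P mA mB).1 intA0) => w hw.
rewrite leNgt; apply/negP => Aw.
move: (hw Aw) => /= /eqP; rewrite -EFinB eqe subr_eq0 => /eqP Y12.
by move: Aw; rewrite /A /= Y12 ltxx.
Qed.

Lemma is_cond_exp_tail_le t X1 X2 (Y1 Y2 : Omega -> R) :
  measurable_from t X1 -> measurable_from t X2 ->
  (forall s w, t <= s -> 0 <= X1 s w) -> (forall s w, t <= s -> 0 <= X2 s w) ->
  (forall s, t <= s -> {ae P, forall w, X1 s w <= X2 s w}) ->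
  is_cond_exp P G (tail_int X1 t) Y1 -> is_cond_exp P G (tail_int X2 t) Y2 ->
  {ae P, forall w, Y1 w <= Y2 w}.
Proof.
move=> mX1 mX2 X10 X20 X12 [GY1 iY1 eY1] [GY2 iY2 eY2].
apply: ae_le_of_integral_le GY1 GY2 iY1 iY2 _ => A GA.
rewrite eY1 // eY2 //; apply: ae_ge0_le_integral => //.
- exact: hGm.
- by move=> w _; exact: tail_int_ge0.
- exact: measurable_funS (measurable_tail_int mX1 X10).
- by move=> w _; exact: tail_int_ge0.
- exact: measurable_funS (measurable_tail_int mX2 X20).
- by apply: filterS (ae_tail_int_le mX1 mX2 X10 X20 X12) => w + _.
Qed.

Lemma is_cond_exp_tail_scale t X (Y : Omega -> R) g : 0 <= g ->
  measurable_from t X -> (forall s w, t <= s -> 0 <= X s w) ->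
  is_cond_exp P G (tail_int X t) Y ->
  is_cond_exp P G (tail_int (fun s w => g * X s w) t) (fun w => g * Y w).
Proof.
move=> g0 mX X0 [GY iY eY]; split.
- move=> B mB.
  have := measurable_funM (measurable_cst g) (@measurable_id _ R setT) measurableT mB.
  by rewrite setTI => /GY.
- by apply: eq_integrable (integrableZl measurableT g iY) => // w _; rewrite /= EFinM.
- move=> A GA; have mA := hGm GA.
  have -> : (\int[P]_(w in A) (g * Y w)%:E = g%:E * \int[P]_(w in A) (Y w)%:E)%E.
    by rewrite -integralZl //; exact: integrableS iY.
  rewrite eY // -ge0_integralZl_EFin //.
  + apply: eq_integral => w _; rewrite /tail_int -ge0_integralZl_EFin //.
    * by move=> s; rewrite /= in_itv /= andbT => ts; rewrite lee_fin X0.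
    * exact: measurable_section_from.
  + by move=> w _; exact: tail_int_ge0.
  + exact: measurable_funS (measurable_tail_int mX X0).
Qed.

End CondExpComparison.

Section ImproveBounds.
Context (R : realType) (d : measure_display) (Omega : measurableType d)
  (P : probability Omega R).
Variable F : R -> set (set Omega).
Hypothesis hFs : forall t, 0 <= t -> sigma_algebra setT (F t).
Hypothesis hFm : forall t, 0 <= t -> F t `<=` measurable.
Variables (theta eps : R) (U W J : R -> Omega -> R).
Hypotheses (htheta : 1 < theta) (heps : 0 <= eps).
Hypotheses (hUprog : progressive F U) (hUnn : nonneg_proc U).
Hypotheses (hWprog : progressive F W) (hWnn : nonneg_proc W).
Hypothesis hJ : is_J P F (fun t w => U t w `^ theta) J.

Let generator s w := U s w * W s w `^ rho theta + eps * U s w `^ theta.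

Hypothesis hWfix : forall t, 0 <= t ->
  is_cond_exp P (F t) (tail_int generator t) (W t).

Let measurable_from_Utheta t : 0 <= t ->
  measurable_from t (fun s w => U s w `^ theta).
Proof.
move=> t0.
exact: measurableT_comp (measurable_powR theta)
  (progressive_measurable_from hFm hUprog t0).
Qed.

Let measurable_from_scaled_Utheta g t : 0 <= t ->
  measurable_from t (fun s w => g * U s w `^ theta).
Proof.
move=> t0; apply: measurable_funM; first exact: measurable_cst.
exact: measurable_from_Utheta.
Qed.

Let measurable_from_generator t : 0 <= t -> measurable_from t generator.
Proof.
move=> t0; apply: measurable_funD.
  apply: measurable_funM; first exact: progressive_measurable_from hFm hUprog t0.
  exact: measurableT_comp (measurable_powR _) (progressive_measurable_from hFm hWprog t0).
exact: measurable_from_scaled_Utheta.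
Qed.

Let generator_ge0 t : 0 <= t -> forall s w, t <= s -> 0 <= generator s w.
Proof.
move=> t0 s w ts; rewrite addr_ge0 // mulr_ge0 // ?powR_ge0 //.
exact: hUnn (le_trans t0 ts).
Qed.

Let is_cond_exp_scaled_Utheta g t : 0 <= g -> 0 <= t ->
  is_cond_exp P (F t) (tail_int (fun s w => g * U s w `^ theta) t) (fun w => g * J t w).
Proof.
move=> g0 t0; exact (is_cond_exp_tail_scale (hFm t0) g0 (measurable_from_Utheta t0)
  (fun s w _ => powR_ge0 _ _) (hJ t0)).
Qed.

Lemma improve_lower_bound K c : 0 < K -> 0 <= c ->
  proc_le P (fun t w => U t w `^ theta) (fun t w => K * J t w) ->
  proc_le P (fun t w => c * J t w) W ->
  proc_le P (fun t w => improve K (rho theta) eps c * J t w) W.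
Proof.
move=> K0 c0 UKJ cJW t t0 /=.
set g := improve K (rho theta) eps c.
have g0 : 0 <= g by rewrite addr_ge0 // powR_ge0.
have gU0 s w : t <= s -> 0 <= g * U s w `^ theta by rewrite mulr_ge0 // powR_ge0.
have le_generator s : t <= s -> {ae P, forall w, g * U s w `^ theta <= generator s w}.
  move=> ts; have s0 := le_trans t0 ts.
  apply: filterS2 (cJW s s0) (UKJ s s0) => w cJWw UKJw.
  exact: improve_mulr_le (hUnn w s0) cJWw UKJw.
exact (is_cond_exp_tail_le (hFs t0) (hFm t0) (measurable_from_scaled_Utheta _ t0)
  (measurable_from_generator t0) gU0 (generator_ge0 t0) le_generator
  (is_cond_exp_scaled_Utheta g0 t0) (hWfix t0)).
Qed.

Lemma improve_upper_bound k c : 0 < k -> 0 <= c ->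
  proc_le P (fun t w => k * J t w) (fun t w => U t w `^ theta) ->
  proc_le P W (fun t w => c * J t w) ->
  proc_le P W (fun t w => improve k (rho theta) eps c * J t w).
Proof.
move=> k0 c0 kJU WcJ t t0 /=.
set g := improve k (rho theta) eps c.
have g0 : 0 <= g by rewrite addr_ge0 // powR_ge0.
have gU0 s w : t <= s -> 0 <= g * U s w `^ theta by rewrite mulr_ge0 // powR_ge0.
have generator_le s : t <= s -> {ae P, forall w, generator s w <= g * U s w `^ theta}.
  move=> ts; have s0 := le_trans t0 ts.
  apply: filterS2 (WcJ s s0) (kJU s s0) => w WcJw kJUw.
  exact: le_improve_mulr (hUnn w s0) (hWnn w s0) WcJw kJUw.
exact (is_cond_exp_tail_le (hFs t0) (hFm t0) (measurable_from_generator t0)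
  (measurable_from_scaled_Utheta _ t0) (generator_ge0 t0) gU0 generator_le
  (hWfix t0) (is_cond_exp_scaled_Utheta g0 t0)).
Qed.

End ImproveBounds.

Section ExtremalConstants.
Context (R : realType) (d : measure_display) (Omega : measurableType d)
  (P : probability Omega R).
Variables J W : R -> Omega -> R.
Hypothesis hJ_ge0 : forall t, 0 <= t -> {ae P, forall w, 0 <= J t w}.
Hypothesis hJ0_gt0 : {ae P, forall w, 0 < J 0 w}.

Lemma ae_exists (Q : Omega -> Prop) : {ae P, forall w, Q w} -> exists w, Q w.
Proof.
move=> [N [mN PN0 QN]]; apply: contrapT => noQ.
have : (P setT <= P N)%E.
  by apply: le_measure; rewrite ?inE // => w _; apply: QN => /= Qw; apply: noQ; exists w.
by rewrite probability_setT PN0 lee_fin ler10.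
Qed.

Lemma proc_le_mulr_lo a b : a <= b ->
  proc_le P (fun t w => b * J t w) W -> proc_le P (fun t w => a * J t w) W.
Proof.
move=> ab bJW t t0; apply: filterS2 (bJW t t0) (hJ_ge0 t0) => w bJWw Jw0.
exact: le_trans (ler_wpM2r Jw0 ab) bJWw.
Qed.

Lemma proc_le_mulr_hi a b : a <= b ->
  proc_le P W (fun t w => a * J t w) -> proc_le P W (fun t w => b * J t w).
Proof.
move=> ab WaJ t t0; apply: filterS2 (WaJ t t0) (hJ_ge0 t0) => w WaJw Jw0.
exact: le_trans WaJw (ler_wpM2r Jw0 ab).
Qed.

Lemma proc_le_mulr_le a b : proc_le P (fun t w => a * J t w) W ->
  proc_le P W (fun t w => b * J t w) -> a <= b.
Proof.
move=> aJW WbJ.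
have abJ : {ae P, forall w, a * J 0 w <= b * J 0 w}.
  by apply: filterS2 (aJW 0 (lexx 0)) (WbJ 0 (lexx 0)) => w; exact: le_trans.
have [w [abJw J0]] : exists w, a * J 0 w <= b * J 0 w /\ 0 < J 0 w.
  by apply: ae_exists; apply: filterS2 abJ hJ0_gt0 => w.
by rewrite -(ler_pM2r J0).
Qed.

Lemma proc_le_mulr_sup (S : set R) : has_sup S ->
  (forall c, S c -> proc_le P (fun t w => c * J t w) W) ->
  proc_le P (fun t w => sup S * J t w) W.
Proof.
move=> supS SW t t0.
have approx n : {ae P, forall w, sup S * J t w <= W t w + n.+1%:R^-1 * J t w}.
  have invn_gt0 : 0 < n.+1%:R^-1 :> R by rewrite invr_gt0 ltr0Sn.
  have [c Sc sup_lt] := sup_adherent invn_gt0 supS.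
  apply: filterS2 (SW c Sc t t0) (hJ_ge0 t0) => w cJW Jw0.
  rewrite -lerBlDr -mulrBl; apply: le_trans cJW.
  by rewrite ler_wpM2r // ltW.
apply: filterS2 (ae_foralln approx) (hJ_ge0 t0) => w approx_w Jw0.
exact: le_of_forall_le_addinvn Jw0 approx_w.
Qed.

Lemma proc_le_mulr_inf (S : set R) : has_inf S ->
  (forall c, S c -> proc_le P W (fun t w => c * J t w)) ->
  proc_le P W (fun t w => inf S * J t w).
Proof.
move=> infS SW t t0.
have approx n : {ae P, forall w, W t w <= inf S * J t w + n.+1%:R^-1 * J t w}.
  have invn_gt0 : 0 < n.+1%:R^-1 :> R by rewrite invr_gt0 ltr0Sn.
  have [c Sc lt_inf] := inf_adherent invn_gt0 infS.
  apply: filterS2 (SW c Sc t t0) (hJ_ge0 t0) => w WcJ Jw0.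
  rewrite -mulrDl; apply: le_trans WcJ _.
  by rewrite ler_wpM2r // ltW.
apply: filterS2 (ae_foralln approx) (hJ_ge0 t0) => w approx_w Jw0.
exact: le_of_forall_le_addinvn Jw0 approx_w.
Qed.

Lemma improve_fixpoint_lower_bound K r eps a c1 c2 :
  0 < K -> 0 <= eps -> r < 1 -> 0 < a -> improve K r eps a = a ->
  (forall c, 0 <= c -> proc_le P (fun t w => c * J t w) W ->
     proc_le P (fun t w => improve K r eps c * J t w) W) ->
  0 < c1 -> proc_le P (fun t w => c1 * J t w) W ->
  proc_le P W (fun t w => c2 * J t w) ->
  proc_le P (fun t w => a * J t w) W.
Proof.
move=> K0 eps0 r1 a0 fixa step c1_gt0 c1JW Wc2J.
pose S := [set c | 0 <= c /\ proc_le P (fun t w => c * J t w) W].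
have Sc1 : S c1 by split => //; exact: ltW.
have supS : has_sup S.
  by split; [exists c1 | exists c2 => c [_ cJW]; exact: proc_le_mulr_le cJW Wc2J].
have sup_gt0 : 0 < sup S := lt_le_trans c1_gt0 (sup_upper_bound supS Sc1).
have supJW : proc_le P (fun t w => sup S * J t w) W :=
  proc_le_mulr_sup supS (fun c Sc => Sc.2).
have : S (improve K r eps (sup S)).
  by split; [rewrite addr_ge0 // powR_ge0 | exact: step (ltW sup_gt0) supJW].
move=> /(sup_upper_bound supS) /(fixpoint_le_of_improve_le K0 eps0 r1 a0 fixa sup_gt0) a_le.
exact: proc_le_mulr_lo a_le supJW.
Qed.

Lemma improve_fixpoint_upper_bound k r eps b c1 c2 :
  0 < k -> 0 <= eps -> r < 1 -> 0 < b -> improve k r eps b = b ->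
  (forall c, 0 <= c -> proc_le P W (fun t w => c * J t w) ->
     proc_le P W (fun t w => improve k r eps c * J t w)) ->
  0 < c1 -> proc_le P (fun t w => c1 * J t w) W ->
  proc_le P W (fun t w => c2 * J t w) ->
  proc_le P W (fun t w => b * J t w).
Proof.
move=> k0 eps0 r1 b0 fixb step c1_gt0 c1JW Wc2J.
pose S := [set c | 0 <= c /\ proc_le P W (fun t w => c * J t w)].
have S_lb c : S c -> c1 <= c by move=> [_ WcJ]; exact: proc_le_mulr_le c1JW WcJ.
have Sc2 : S c2.
  by split => //; exact: le_trans (ltW c1_gt0) (proc_le_mulr_le c1JW Wc2J).
have infS : has_inf S by split; [exists c2 | exists c1].
have inf_gt0 : 0 < inf S := lt_le_trans c1_gt0 (lb_le_inf infS.1 S_lb).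
have WinfJ : proc_le P W (fun t w => inf S * J t w) :=
  proc_le_mulr_inf infS (fun c Sc => Sc.2).
have : S (improve k r eps (inf S)).
  by split; [rewrite addr_ge0 // powR_ge0 | exact: step (ltW inf_gt0) WinfJ].
move=> /(ge_inf infS.2) /(le_fixpoint_of_le_improve k0 eps0 r1 b0 fixb inf_gt0) le_b.
exact: proc_le_mulr_hi le_b WinfJ.
Qed.

End ExtremalConstants.

Theorem corollary6p4 (R : realType) (d : measure_display)
  (Omega : measurableType d) (P : probability Omega R)
  (F : R -> set (set Omega)) (hF : std_filtration P F)
  (theta : R) (htheta : 1 < theta) (eps : R) (heps : 0 <= eps)
  (U : R -> Omega -> R) (hUprog : progressive F U) (hUnn : nonneg_proc U)
  (k K : R) (hk : 0 < k) (hkK : k <= K)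
  (J : R -> Omega -> R)
  (hSO : SO P F k K (fun t w => U t w `^ theta) J)
  (A B : R)
  (hApos : 0 < eps -> 0 < A /\ A = K^-1 * (A `^ rho theta + eps))
  (hBpos : 0 < eps -> 0 < B /\ B = k^-1 * (B `^ rho theta + eps))
  (hA0 : eps = 0 -> A = K `^ (- theta))
  (hB0 : eps = 0 -> B = k `^ (- theta))
  (W : R -> Omega -> R) (hW : fixed_point P F theta eps U W)
  (c1 c2 : R) (hc1 : 0 < c1) (hc12 : c1 <= c2)
  (hWlo : proc_le P (fun t w => c1 * J t w) W)
  (hWhi : proc_le P W (fun t w => c2 * J t w)) :
  proc_le P (fun t w => k * A * J t w) W /\
  proc_le P W (fun t w => K * B * J t w).
Proof.
case: hF => -[hFs hFm _] _ _ _ _.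
case: hSO => -[_ Utheta_gt0 _] hJ kJU UKJ.
case: hW => -[hWprog hWnn _] _ hWfix.
have K0 : 0 < K := lt_le_trans hk hkK.
have J_gt0 t : 0 <= t -> {ae P, forall w, 0 < J t w}.
  move=> t0; apply: filterS (UKJ t t0) => w /(lt_le_trans (Utheta_gt0 t w t0)).
  by rewrite pmulr_rgt0.
have J_ge0 t : 0 <= t -> {ae P, forall w, 0 <= J t w}.
  by move=> t0; apply: filterS (J_gt0 t t0) => w /ltW.
have [A0 fixKA] := improve_fixpoint htheta K0 heps hApos hA0.
have [B0 fixkB] := improve_fixpoint htheta hk heps hBpos hB0.
have KAJW : proc_le P (fun t w => K * A * J t w) W.
  apply: (improve_fixpoint_lower_bound J_ge0 (J_gt0 0 (lexx 0)) K0 heps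
    (rho_lt1 htheta) (mulr_gt0 K0 A0) fixKA) hc1 hWlo hWhi.
  by move=> c c0; exact (improve_lower_bound hFs hFm htheta heps hUprog hUnn
    hWprog hJ hWfix K0 c0 UKJ).
have WkBJ : proc_le P W (fun t w => k * B * J t w).
  apply: (improve_fixpoint_upper_bound J_ge0 (J_gt0 0 (lexx 0)) hk heps
    (rho_lt1 htheta) (mulr_gt0 hk B0) fixkB) hc1 hWlo hWhi.
  by move=> c c0; exact (improve_upper_bound hFs hFm htheta heps hUprog hUnn
    hWprog hWnn hJ hWfix hk c0 kJU).
have kA_le : k * A <= K * A by rewrite ler_wpM2r // ltW.
have kB_le : k * B <= K * B by rewrite ler_wpM2r // ltW.
exact: conj (proc_le_mulr_lo J_ge0 kA_le KAJW) (proc_le_mulr_hi J_ge0 kB_le WkBJ).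
Qed.
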